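(* Let $\lambda\in\mathbb{C}$ and complex sequences $(p_l)_{l\in\mathbb{Z}},(q_m)_{m\in\mathbb{Z}}$ be given, with $p_l\ne\lambda$, $q_m\neq\lambda$. Fix $s_l,t_m\in\mathbb{C}$ with $s_l^2=p_l-\lambda$, $t_m^2=q_m-\lambda$ (i.e. $s_l=(p_l-\lambda)^{1/2}$, $t_m=(q_m-\lambda)^{1/2}$), and set $\alpha_l=1/s_l$, $\beta_m=1/t_m$. Let $\phi:\mathbb{Z}^2\to\mathbb{C}$ be a (generic, nonvanishing) solution of \[ \frac{\widetilde{\overline\phi}}{\phi}=\frac{\alpha_l\,\overline\phi-\beta_m\,\widetilde\phi}{\alpha_l\,\widetilde\phi-\beta_m\,\overline\phi}. \] Then \[ u=\frac{s_l\,\overline\phi-t_m\,\widetilde\phi}{\phi},\qquad v=s_l\,\frac{\overline\phi}{\phi} \] satisfy respectively the non-autonomous dKdV equation $\widetilde{\overline u}-u=\frac{q_{m+1}-p_l}{\widetilde u}-\frac{q_m-p_{l+1}}{\overline u}$ and the equation \[ \begin{aligned} &q_m\big(v\overline v-\widetilde v\widetilde{\overline v}\big)^2+\big(v-\widetilde{\overline v}\big)\big(\overline v-\widetilde v\big)\big(\lambda-v\overline v\big)\big(\lambda-\widetilde v\widetilde{\overline v}\big) +\big(p_{l+1}v-p_l\widetilde{\overline v}\big)\big(p_l\overline v-p_{l+1}\widetilde v\big)\\ &\quad-(p_l+p_{l+1})\big(\lambda v\overline v+\lambda\widetilde v\widetilde{\overline v}-2v\overline v\widetilde v\widetilde{\overline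 v}\big) +\big(p_{l+1}v\widetilde v+p_l\overline v\widetilde{\overline v}\big)\big(2\lambda-v\overline v-\widetilde v\widetilde{\overline v}\big)=0. \end{aligned} \]
   Context: Shift notation: for $f:\mathbb{Z}^2\to\mathbb{C}$, $f=f_{l,m}$, $\overline f=f_{l+1,m}$, $\widetilde f=f_{l,m+1}$, $\widetilde{\overline f}=f_{l+1,m+1}$; shifts act on parameters as well ($\overline{p_l}=p_{l+1}$, $\widetilde{q_m}=q_{m+1}$). *)

From HB Require Import structures.
From mathcomp Require Import all_boot all_order all_algebra.
From mathcomp Require Import complex.
From mathcomp Require Import reals.
Set Implicit Arguments. Unset Strict Implicit. Unset Printing Implicit Defensive.
Import Order.TTheory GRing.Theory Num.Theory.
Local Open Scope ring_scope.

(* u = (s_l phibar - t_m phitilde)/phi at the lattice point (l,m) *)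
Definition u_of (R : realType) (s t : int -> R[i]) (phi : int -> int -> R[i])
  (l m : int) : R[i] :=
  (s l * phi (l + 1)%R m - t m * phi l (m + 1)%R) / phi l m.

Definition v_of (R : realType) (s : int -> R[i]) (phi : int -> int -> R[i])
  (l m : int) : R[i] :=
  s l * (phi (l + 1)%R m / phi l m).

From HB Require Import structures.
From mathcomp Require Import all_boot all_order all_algebra.
From mathcomp Require Import complex.
From mathcomp Require Import reals.
From mathcomp Require Import ring.
Set Implicit Arguments. Unset Strict Implicit. Unset Printing Implicit Defensive.
Import Order.TTheory GRing.Theory Num.Theory.
Local Open Scope ring_scope.

(* Write f^ for the shift of f in l and f~ for the shift in m.  All the
   work happens over an arbitrary field K.
   1. Since s_l, t_m <> 0, clearing denominators turns the lattice equation
      for phi into the quad relation  phi~^ (s phi^ - t phi~) = phi (s phi~ - t phi^),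
      with u = (s phi^ - t phi~)/phi nonzero; equivalently u phi~^ = s phi~ - t phi^.
   2. dKdV: multiply it by phi~^, then eliminate phi^^~ and phi~~^ with the
      quad relation on the right and the upper neighbouring quads.
   3. v-equation: with w = v - u = t phi~/phi the quad relation reads
        (R1)  u w v~ = s^2 w - t^2 v,
      and directly from the definitions  (R3)  v (v^ - u^) = v~ w.
      Together with (R1) on the right neighbouring quad, these determine
      q_m, v^ and v~^ rationally from v, u, v~, u^, and the v-equation becomes
      a rational identity (lemma v_equation_of_relations). *)

Lemma square_root_neq0 (K : fieldType) (x r c : K) :
  r != c -> x ^+ 2 = r - c -> x != 0.
Proof.
move=> rc hx; apply: contra_neq rc => x0.
by apply/eqP; rewrite -subr_eq0 -hx x0 expr0n.
Qed.

(* Clearing denominators in  w/x = (a^-1 y - b^-1 z)/(a^-1 z - b^-1 y):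
   the denominator cannot vanish since w/x <> 0, and the equation becomes
   polynomial.  With a = s, b = t this is the lattice equation for phi, and
   the nonvanishing factor is u phi. *)
Lemma lattice_eq_cross (K : fieldType) (a b x y z w : K) :
  a != 0 -> b != 0 -> x != 0 -> w != 0 ->
  w / x = (a^-1 * y - b^-1 * z) / (a^-1 * z - b^-1 * y) ->
  a * y - b * z != 0 /\ w * (a * y - b * z) = x * (a * z - b * y).
Proof.
move=> a0 b0 x0 w0 hw.
set D := a^-1 * z - b^-1 * y in hw.
have D0 : D != 0.
  apply: contra_neq (mulf_neq0 w0 (invr_neq0 x0)) => D0.
  by rewrite hw D0 invr0 mulr0.
have eD : a * y - b * z = - (a * b) * D.
  by rewrite /D; field; rewrite a0 b0.
have -> : w = (a^-1 * y - b^-1 * z) / D * x by rewrite -hw divfK.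
rewrite eD mulf_neq0 ?oppr_eq0 ?mulf_neq0 //; split => //.
by field; rewrite D0 a0 b0.
Qed.

(* The quad-graph relations between v = s phi^/phi, its shifts and
   u = (s phi^ - t phi~)/phi (here p0 = s_l^2 + lam, p1 = s_(l+1)^2 + lam,
   q = t_m^2 + lam) imply the v-equation: they express q, vb and vtb
   rationally through v, u, vt and ub. *)
Lemma v_equation_of_relations (K : fieldType) (lam p0 p1 q v vb vt vtb u ub : K) :
  v != 0 -> vt != 0 -> v - u != 0 -> ub != 0 ->
  u * (v - u) * vt = (p0 - lam) * (v - u) - (q - lam) * v ->
  ub * (vb - ub) * vtb = (p1 - lam) * (vb - ub) - (q - lam) * vb ->
  v * (vb - ub) = vt * (v - u) ->
     q * (v * vb - vt * vtb) ^+ 2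
     + (v - vtb) * (vb - vt) * (lam - v * vb) * (lam - vt * vtb)
     + (p1 * v - p0 * vtb) * (p0 * vb - p1 * vt)
     - (p0 + p1) * (lam * v * vb + lam * vt * vtb - 2 * v * vb * vt * vtb)
     + (p1 * v * vt + p0 * vb * vtb) * (2 * lam - v * vb - vt * vtb)
     = 0.
Proof.
move=> v0 vt0 w0 ub0 R1 R2 R3.
have eq_q : q = lam + ((p0 - lam) * (v - u) - u * (v - u) * vt) / v.
  by rewrite R1 subKr mulfK // addrC subrK.
have evb : vb = ub + vt * (v - u) / v.
  by rewrite -R3 mulrAC divff // mul1r addrC subrK.
have wb0 : vb - ub != 0.
  by apply: contra_neq (mulf_neq0 vt0 w0) => wb; rewrite -R3 wb mulr0.
have evtb : vtb = ((p1 - lam) * (vb - ub) - (q - lam) * vb) / (ub * (vb - ub)).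
  by rewrite -R2 mulrC mulKf // mulf_neq0.
rewrite evtb evb eq_q.
by field; rewrite v0 ub0 addrAC mulNr subrr add0r mulf_neq0.
Qed.

Section LatticeQuad.
Variable K : fieldType.
Variables (lam : K) (p q s t : int -> K) (phi : int -> int -> K).
Hypothesis hs : forall l, s l ^+ 2 = p l - lam.
Hypothesis ht : forall m, t m ^+ 2 = q m - lam.
Hypothesis s_neq0 : forall l, s l != 0.
Hypothesis t_neq0 : forall m, t m != 0.
Hypothesis phi_neq0 : forall l m, phi l m != 0.
(* The lattice equation for phi with denominators cleared. *)
Hypothesis quad : forall l m,
  phi (l + 1) (m + 1) * (s l * phi (l + 1) m - t m * phi l (m + 1)) =
  phi l m * (s l * phi l (m + 1) - t m * phi (l + 1) m).

Definition lattice_u l m := (s l * phi (l + 1) m - t m * phi l (m + 1)) / phi l m.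
Definition lattice_v l m := s l * (phi (l + 1) m / phi l m).
Local Notation u := lattice_u.
Local Notation v := lattice_v.

Lemma u_mul_phi l m : u l m * phi l m = s l * phi (l + 1) m - t m * phi l (m + 1).
Proof. by rewrite /u divfK. Qed.

Lemma u_mul_phi_diag l m :
  u l m * phi (l + 1) (m + 1) = s l * phi l (m + 1) - t m * phi (l + 1) m.
Proof. by rewrite /u mulrAC (mulrC (_ - _)) quad mulrC mulKf. Qed.

(* dKdV: multiply by phi~^ and eliminate phi^^~ and phi~~^ using the quad
   relation on the right and upper neighbouring quads. *)
Lemma lattice_dKdV l m :
  u l (m + 1) != 0 -> u (l + 1) m != 0 ->
  u (l + 1) (m + 1) - u l m =
  (q (m + 1) - p l) / u l (m + 1) - (q m - p (l + 1)) / u (l + 1) m.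
Proof.
move=> ut0 ub0.
have bar : s (l + 1) * phi (l + 1 + 1) (m + 1) =
    ((s (l + 1) ^+ 2 - t m ^+ 2) * phi (l + 1) (m + 1)
     - t m * (u (l + 1) m * phi (l + 1) m)) / u (l + 1) m.
  apply: (canRL (mulfK ub0)).
  by rewrite mulrC mulrCA u_mul_phi_diag u_mul_phi; ring.
have til : t (m + 1) * phi (l + 1) (m + 1 + 1) =
    ((s l ^+ 2 - t (m + 1) ^+ 2) * phi (l + 1) (m + 1)
     - s l * (u l (m + 1) * phi l (m + 1))) / u l (m + 1).
  apply: (canRL (mulfK ut0)).
  by rewrite mulrC mulrCA u_mul_phi_diag u_mul_phi; ring.
have -> : q (m + 1) - p l = t (m + 1) ^+ 2 - s l ^+ 2.
  by rewrite hs ht opprB addrA subrK.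
have -> : q m - p (l + 1) = t m ^+ 2 - s (l + 1) ^+ 2.
  by rewrite hs ht opprB addrA subrK.
apply: (mulIf (phi_neq0 (l + 1) (m + 1))).
rewrite mulrBl u_mul_phi bar til u_mul_phi_diag.
by field; rewrite ub0 ut0.
Qed.

Lemma v_sub_u l m : v l m - u l m = t m * (phi l (m + 1) / phi l m).
Proof. by rewrite /v /u; field; rewrite phi_neq0. Qed.

Lemma v_quad_relation l m :
  u l m * (v l m - u l m) * v l (m + 1) =
  (p l - lam) * (v l m - u l m) - (q m - lam) * v l m.
Proof.
rewrite -hs -ht v_sub_u.
transitivity (s l * t m / phi l m * (u l m * phi (l + 1) (m + 1))).
  by rewrite /v; field; rewrite !phi_neq0.
by rewrite u_mul_phi_diag /v; field; rewrite phi_neq0.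
Qed.

Lemma v_shift_relation l m :
  v l m * (v (l + 1) m - u (l + 1) m) = v l (m + 1) * (v l m - u l m).
Proof. by rewrite !v_sub_u /v; field; rewrite !phi_neq0. Qed.

Lemma lattice_v_equation l m :
  let v0 := v l m in let vb := v (l + 1) m in
  let vt := v l (m + 1) in let vtb := v (l + 1) (m + 1) in
  u (l + 1) m != 0 ->
     q m * (v0 * vb - vt * vtb) ^+ 2
     + (v0 - vtb) * (vb - vt) * (lam - v0 * vb) * (lam - vt * vtb)
     + (p (l + 1) * v0 - p l * vtb) * (p l * vb - p (l + 1) * vt)
     - (p l + p (l + 1)) * (lam * v0 * vb + lam * vt * vtb - 2 * v0 * vb * vt * vtb)
     + (p (l + 1) * v0 * vt + p l * vb * vtb) * (2 * lam - v0 * vb - vt * vtb)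
     = 0.
Proof.
move=> v0 vb vt vtb ub0.
apply: v_equation_of_relations ub0
  (v_quad_relation l m) (v_quad_relation (l + 1) m) (v_shift_relation l m).
- by rewrite /v0 /v mulf_neq0 ?mulf_neq0 ?invr_neq0.
- by rewrite /vt /v mulf_neq0 ?mulf_neq0 ?invr_neq0.
- by rewrite v_sub_u mulf_neq0 ?mulf_neq0 ?invr_neq0.
Qed.

End LatticeQuad.

Theorem mainTheorem9 (R : realType) (lam : R[i]) (p q s t : int -> R[i])
  (phi : int -> int -> R[i])
  (hp : forall l, p l != lam) (hq : forall m, q m != lam)
  (hs : forall l, s l ^+ 2 = p l - lam) (ht : forall m, t m ^+ 2 = q m - lam)
  (hphi0 : forall l m, phi l m != 0)
  (hphi : forall l m,
     phi (l + 1) (m + 1) / phi l m =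
     ((s l)^-1 * phi (l + 1) m - (t m)^-1 * phi l (m + 1)) /
     ((s l)^-1 * phi l (m + 1) - (t m)^-1 * phi (l + 1) m)) :
  (forall l m,
     let u := u_of s t phi in
     u l (m + 1) != 0 -> u (l + 1) m != 0 ->
     u (l + 1) (m + 1) - u l m =
       (q (m + 1) - p l) / u l (m + 1) - (q m - p (l + 1)) / u (l + 1) m) /\
  (forall l m,
     let v0 := v_of s phi l m in
     let vb := v_of s phi (l + 1) m in
     let vt := v_of s phi l (m + 1) in
     let vtb := v_of s phi (l + 1) (m + 1) in
     q m * (v0 * vb - vt * vtb) ^+ 2
     + (v0 - vtb) * (vb - vt) * (lam - v0 * vb) * (lam - vt * vtb)
     + (p (l + 1) * v0 - p l * vtb) * (p l * vb - p (l + 1) * vt)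
     - (p l + p (l + 1)) * (lam * v0 * vb + lam * vt * vtb - 2 * v0 * vb * vt * vtb)
     + (p (l + 1) * v0 * vt + p l * vb * vtb) * (2 * lam - v0 * vb - vt * vtb)
     = 0).
Proof.
have s0 l : s l != 0 := square_root_neq0 (hp l) (hs l).
have t0 m : t m != 0 := square_root_neq0 (hq m) (ht m).
have cross l m := lattice_eq_cross (s0 l) (t0 m) (hphi0 l m)
                    (hphi0 (l + 1) (m + 1)) (hphi l m).
have quad l m := (cross l m).2.
have u0 l m : lattice_u s t phi l m != 0.
  by rewrite mulf_neq0 ?invr_neq0 // (cross l m).1.
split=> l m.
- exact: lattice_dKdV.
- exact: lattice_v_equation.
Qed.
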